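(* Let $d$ be a positive square-free integer with $d\equiv 7\pmod 8$, $K=\mathbb{Q}[\sqrt{-d}]$ with ring of integers $\mathfrak{o}_K$, and $L=\mathbb{Q}[\sqrt{2d}]$ (where $2d$ is square-free) with ring of integers $\mathfrak{o}_L$. Let $\xi,\psi,\phi$ be pairwise distinct elements of $\{1,i,j,k\}$ and $p,m\in\mathbb{Z}$. Then the following are equivalent: (i) $u:=m\sqrt{-d}\,\xi+p\psi+(1-p)\phi\in\mathcal{U}(\mathbb{H}(\mathfrak{o}_K))$; (ii) $\epsilon:=(2p-1)+m\sqrt{2d}\in\mathcal{U}(\mathfrak{o}_L)$.
   Context: $\mathbb{H}(K)=\left(\frac{-1,-1}{K}\right)$ is the quaternion algebra over $K$ with $K$-basis $1,i,j,k$, $i^2=j^2=-1$, $k=ji=-ij$; $\mathbb{H}(\mathfrak{o}_K)$ is the set of $\mathfrak{o}_K$-linear combinations of $1,i,j,k$. *)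

From HB Require Import structures.
From mathcomp Require Import all_boot all_order all_algebra all_field.
Set Implicit Arguments. Unset Strict Implicit. Unset Printing Implicit Defensive.
Import Order.TTheory GRing.Theory Num.Theory.
Local Open Scope ring_scope.

Definition squarefree (n : nat) : Prop :=
  forall k : nat, (1 < k)%N -> ~~ (k * k %| n)%N.

Definition in_quad_field (r : int) (x : algC) : Prop :=
  exists a b : rat, x = ratr a + ratr b * sqrtC (r%:~R).

Definition in_ring_of_int (r : int) (x : algC) : Prop :=
  in_quad_field r x /\ x \in Aint.

Definition is_unit_oF (r : int) (x : algC) : Prop :=
  in_ring_of_int r x /\ exists y, in_ring_of_int r y /\ x * y = 1.

(* Quaternions a0 + a1 i + a2 j + a3 k over algC, with i^2 = j^2 = -1,
   k = j i = - i j. *)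
Record quat := Quat { q0 : algC; q1 : algC; q2 : algC; q3 : algC }.

Definition qadd (a b : quat) : quat :=
  Quat (q0 a + q0 b) (q1 a + q1 b) (q2 a + q2 b) (q3 a + q3 b).
Definition qscale (c : algC) (a : quat) : quat :=
  Quat (c * q0 a) (c * q1 a) (c * q2 a) (c * q3 a).
Definition qone : quat := Quat 1 0 0 0.

Definition qmul (a b : quat) : quat :=
  Quat (q0 a * q0 b - q1 a * q1 b - q2 a * q2 b - q3 a * q3 b)
       (q0 a * q1 b + q1 a * q0 b - q2 a * q3 b + q3 a * q2 b)
       (q0 a * q2 b + q2 a * q0 b + q1 a * q3 b - q3 a * q1 b)
       (q0 a * q3 b + q3 a * q0 b - q1 a * q2 b + q2 a * q1 b).

Definition qbasis (r : 'I_4) : quat :=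
  Quat (if val r == 0%N then 1 else 0) (if val r == 1%N then 1 else 0)
       (if val r == 2%N then 1 else 0) (if val r == 3%N then 1 else 0).

Definition in_HoK (r : int) (a : quat) : Prop :=
  [/\ in_ring_of_int r (q0 a), in_ring_of_int r (q1 a),
      in_ring_of_int r (q2 a) & in_ring_of_int r (q3 a)].

Definition is_unit_HoK (r : int) (a : quat) : Prop :=
  in_HoK r a /\ exists b, in_HoK r b /\ qmul a b = qone /\ qmul b a = qone.

From HB Require Import structures.
From mathcomp Require Import all_boot all_order all_algebra all_field.
From mathcomp Require Import zify ring.
Set Implicit Arguments.
Unset Strict Implicit.
Unset Printing Implicit Defensive.
Import Order.TTheory GRing.Theory Num.Theory.
Local Open Scope ring_scope.

(* Both units are detected by their norms. The reduced norm of u is the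
   integer n = p^2 + (1-p)^2 - d m^2, and u is a unit of H(o_K) iff n = +-1,
   the inverse being +-(conjugate of u). The field norm of epsilon is 2n - 1,
   and epsilon is a unit of o_L iff 2n - 1 = +-1, i.e. n = 1 or n = 0. Since
   p^2 + (1-p)^2 = 1 (mod 4) while d m^2 = 0 or 3 (mod 4), n = 1 or 2 (mod 4),
   which rules out n = -1 and n = 0; so both conditions say n = 1. *)

Lemma int_parity (k : int) : exists a, k = 2 * a \/ k = 2 * a + 1.
Proof. by exists (k %/ 2)%Z; lia. Qed.

Lemma residue_mod4_neq0N1 (p m d : int) : (d %% 4)%Z = 3 ->
  let n := p ^+ 2 + (1 - p) ^+ 2 - m ^+ 2 * d in n <> 0 /\ n <> -1.
Proof.
move=> d4 n; have [q dq] : exists q, d = 4 * q + 3 by exists (d %/ 4)%Z; lia.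
rewrite {}/n {}dq; have [a [->|->]] := int_parity p; have [b [->|->]] := int_parity m.
all: split; nia.
Qed.

Lemma Aint_intr_unit (n : int) (z : algC) : z \in Aint -> n%:~R * z = 1 ->
  n = 1 \/ n = -1.
Proof.
move=> zA nz1.
have n0 : (n%:~R : algC) != 0.
  by apply: contra_eqN nz1 => /eqP ->; rewrite mul0r eq_sym oner_eq0.
have zQ : z \in Crat.
  by rewrite -[z](mulKf n0) nz1 mulr1 rpredV rpred_int.
have /intrP [k zk] := Cint_rat_Aint zQ zA.
have : k * n = 1 by apply: (@intr_inj algC); rewrite intrM mulrC -zk.
by move/intUnitRing.unitzPl; lia.
Qed.

Lemma sqrtC_int_Aint (k : int) : sqrtC (k%:~R : algC) \in Aint.
Proof.
apply: (@root_monic_Aint ('X^2 - (k%:~R)%:P)).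
- by rewrite /root !hornerE sqrtCK subrr.
- by rewrite monicXnsubC.
- by rewrite polyOverXnsubC rpred_int.
Qed.

Lemma sqrtC_int_Crat (k : int) : sqrtC (k%:~R : algC) \in Crat ->
  exists a : int, k = a ^+ 2.
Proof.
move=> /Cint_rat_Aint /(_ (sqrtC_int_Aint k)) /intrP [a ha]; exists a.
by apply: (@intr_inj algC); rewrite rmorphXn /= -ha sqrtCK.
Qed.

Lemma sqrtC_double_odd_irr (d : nat) : odd d ->
  sqrtC ((2 * d%:Z)%:~R : algC) \notin Crat.
Proof.
move=> d_odd; apply/negP => /sqrtC_int_Crat [a ha].
have [q dq] : exists q : int, d%:Z = 2 * q + 1.
  by exists d./2%:Z; rewrite -{1}(odd_double_half d) d_odd; lia.
by move: ha; rewrite dq; have [b [->|->]] := int_parity a; nia.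
Qed.

Section QuadraticConjugation.

Variable t : algC.
Hypothesis t2_rat : t ^+ 2 \in Crat.
Hypothesis t_irr : t \notin Crat.

(* [conj_pair z w] says w is the image of z under the automorphism t |-> -t
   of Q(t); this map is tracked by hand instead of being constructed. *)
Definition conj_pair (z w : algC) :=
  exists a b : rat, z = ratr a + ratr b * t /\ w = ratr a - ratr b * t.

Lemma conj_pair_rat c : conj_pair (ratr c) (ratr c).
Proof. by exists c, 0; rewrite rmorph0 mul0r addr0 subr0. Qed.

Lemma conj_pairD z1 w1 z2 w2 :
  conj_pair z1 w1 -> conj_pair z2 w2 -> conj_pair (z1 + z2) (w1 + w2).
Proof.
move=> [a1 [b1 [-> ->]]] [a2 [b2 [-> ->]]]; exists (a1 + a2), (b1 + b2).
by rewrite !rmorphD; split; ring.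
Qed.

Lemma conj_pairM z1 w1 z2 w2 :
  conj_pair z1 w1 -> conj_pair z2 w2 -> conj_pair (z1 * z2) (w1 * w2).
Proof.
have /CratP [T tT] := t2_rat.
move=> [a1 [b1 [-> ->]]] [a2 [b2 [-> ->]]].
exists (a1 * a2 + b1 * b2 * T), (a1 * b2 + b1 * a2).
by rewrite !rmorphD !rmorphM /= -tT; split; ring.
Qed.

Lemma conj_pair_horner (P : {poly rat}) z w : conj_pair z w ->
  conj_pair (map_poly ratr P).[z] (map_poly ratr P).[w].
Proof.
move=> zw; elim/poly_ind: P => [|P c IH].
  by rewrite rmorph0 !horner0; have := conj_pair_rat 0; rewrite rmorph0.
rewrite rmorphD rmorphM /= map_polyX map_polyC !hornerMXaddC.
apply: conj_pairD; [exact: conj_pairM IH zw | exact: conj_pair_rat].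
Qed.

Lemma conj_pair_Crat z w : conj_pair z w -> z \in Crat -> w = z.
Proof.
move=> [a [b [-> ->]]] zQ; have [-> | b0] := eqVneq b 0.
  by rewrite rmorph0 mul0r addr0 subr0.
suff : t \in Crat by rewrite (negPf t_irr).
have -> : t = (ratr a + ratr b * t - ratr a) / ratr b.
  by rewrite addrAC subrr add0r [_ / _]mulrC mulKf // fmorph_eq0.
by rewrite rpredM ?rpredB ?rpredV ?rpred_rat.
Qed.

Lemma Aint_conj_pair z w : conj_pair z w -> z \in Aint -> w \in Aint.
Proof.
move=> zw zA; have [P [mP _] _] := minCpolyP z.
apply: (root_monic_Aint (p := minCpoly z)); [|exact: minCpoly_monic|exact: zA].
have /rootP z_root := root_minCpoly z.
have := conj_pair_horner P zw; rewrite -mP z_root => /conj_pair_Crat w_root.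
by apply/rootP; rewrite w_root ?rpred0.
Qed.

End QuadraticConjugation.

Lemma in_ring_of_int_intr r (k : int) : in_ring_of_int r k%:~R.
Proof.
split; last exact: Aint_int.
by exists k%:~R, 0; rewrite ratr_int rmorph0 mul0r addr0.
Qed.

Lemma in_ring_of_int_sqrt r : in_ring_of_int r (sqrtC r%:~R).
Proof.
split; last exact: sqrtC_int_Aint.
by exists 0, 1; rewrite rmorph0 rmorph1 add0r mul1r.
Qed.

Lemma in_ring_of_intD r x y :
  in_ring_of_int r x -> in_ring_of_int r y -> in_ring_of_int r (x + y).
Proof.
move=> [[a [b ->]] xA] [[c [e ->]] yA]; split; last exact: rpredD.
by exists (a + c), (b + e); rewrite !rmorphD /=; ring.
Qed.

Lemma in_ring_of_intMz r (k : int) x :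
  in_ring_of_int r x -> in_ring_of_int r (k%:~R * x).
Proof.
move=> [[a [b ->]] xA]; split; last by rewrite rpredM ?Aint_int.
by exists (k%:~R * a), (k%:~R * b); rewrite !rmorphM /= !ratr_int; ring.
Qed.

Lemma in_ring_of_int_quad r (a b : int) :
  in_ring_of_int r (a%:~R + b%:~R * sqrtC r%:~R).
Proof.
apply: in_ring_of_intD; first exact: in_ring_of_int_intr.
exact/in_ring_of_intMz/in_ring_of_int_sqrt.
Qed.

Lemma is_unit_oF_norm (D a b : int) : sqrtC (D%:~R : algC) \notin Crat ->
  is_unit_oF D (a%:~R + b%:~R * sqrtC D%:~R) <->
  a ^+ 2 - b ^+ 2 * D = 1 \/ a ^+ 2 - b ^+ 2 * D = -1.
Proof.
set t := sqrtC _ => t_irr; set N := _ - _.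
have t2_rat : t ^+ 2 \in Crat by rewrite sqrtCK rpred_int.
set x := _ + _; set x' := a%:~R - b%:~R * t.
have xx' : conj_pair t x x' by exists a%:~R, b%:~R; rewrite !ratr_int.
have xN : x * x' = N%:~R.
  have -> : x * x' = a%:~R ^+ 2 - b%:~R ^+ 2 * t ^+ 2 by rewrite /x /x'; ring.
  by rewrite sqrtCK /N !(intrB, intrM, expr2).
split.
- case=> [_ [y [[[c [e ey]] yA] xy1]]].
  have yy' : conj_pair t y (ratr c - ratr e * t) by exists c, e.
  have x'y'1 : x' * (ratr c - ratr e * t) = 1.
    rewrite -xy1; apply: (conj_pair_Crat t_irr (conj_pairM t2_rat xx' yy')).
    by rewrite xy1 rpred1.
  apply: (@Aint_intr_unit N (y * (ratr c - ratr e * t))).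
    by rewrite rpredM // (Aint_conj_pair t2_rat t_irr yy').
  by rewrite -xN mulrACA xy1 x'y'1 mulr1.
- move=> N1; have NN : N * N = 1 by case: N1 => ->.
  split; first exact: in_ring_of_int_quad.
  exists (N%:~R * x'); split; last by rewrite mulrCA xN -intrM NN.
  by apply: in_ring_of_intMz; rewrite /x' -mulNr -intrN; apply: in_ring_of_int_quad.
Qed.

Definition qnorm (a : quat) : algC :=
  q0 a ^+ 2 + q1 a ^+ 2 + q2 a ^+ 2 + q3 a ^+ 2.

Definition qconj (a : quat) : quat := Quat (q0 a) (- q1 a) (- q2 a) (- q3 a).

Lemma qnormM a b : qnorm (qmul a b) = qnorm a * qnorm b.
Proof. by case: a b => [a0 a1 a2 a3] [b0 b1 b2 b3]; rewrite /qnorm /=; ring. Qed.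

Lemma qnorm1 : qnorm qone = 1.
Proof. by rewrite /qnorm /= expr1n !expr0n /= !addr0. Qed.

Lemma qmul_scale_conj c a : c * qnorm a = 1 ->
  qmul a (qscale c (qconj a)) = qone /\ qmul (qscale c (qconj a)) a = qone.
Proof.
case: a => [a0 a1 a2 a3]; rewrite /qnorm /qmul /qscale /qconj /qone /= => ca1.
by split; congr Quat; rewrite -?ca1; ring.
Qed.

Lemma qnorm_basis3 (a b c : algC) (x y z : 'I_4) :
  x != y -> x != z -> y != z ->
  qnorm (qadd (qscale a (qbasis x)) (qadd (qscale b (qbasis y)) (qscale c (qbasis z))))
  = a ^+ 2 + b ^+ 2 + c ^+ 2.
Proof.
case: x => [[|[|[|[|x]]]] ?] //; case: y => [[|[|[|[|y]]]] ?] //;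
case: z => [[|[|[|[|z]]]] ?] // => _ _ _; rewrite /qnorm /=; ring.
Qed.

Lemma in_HoK_qadd r a b : in_HoK r a -> in_HoK r b -> in_HoK r (qadd a b).
Proof. by case=> ? ? ? ? [? ? ? ?]; split; apply: in_ring_of_intD. Qed.

Lemma in_HoK_qscale_basis r c x :
  in_ring_of_int r c -> in_HoK r (qscale c (qbasis x)).
Proof.
move=> c_oK; have c_if (b : bool) : in_ring_of_int r (c * (if b then 1 else 0)).
  by case: b; rewrite ?mulr1 ?mulr0 // -(mulr0z 1); apply: in_ring_of_int_intr.
by split; apply: c_if.
Qed.

Lemma in_HoK_qscale_conj r (k : int) a :
  in_HoK r a -> in_HoK r (qscale k%:~R (qconj a)).
Proof.
by case=> ? ? ? ?; split; rewrite /= ?mulrN -?mulNr -?intrN; apply: in_ring_of_intMz.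
Qed.

Lemma qnorm_Aint r a : in_HoK r a -> qnorm a \in Aint.
Proof. by case=> [[_ ?] [_ ?] [_ ?] [_ ?]]; rewrite /qnorm !rpredD ?rpredX. Qed.

Lemma is_unit_HoK_norm r a (n : int) : in_HoK r a -> qnorm a = n%:~R ->
  is_unit_HoK r a <-> n = 1 \/ n = -1.
Proof.
move=> a_HoK an; split.
- case=> [_ [b [b_HoK [ab1 _]]]]; apply: (Aint_intr_unit (qnorm_Aint b_HoK)).
  by rewrite -an -qnormM ab1 qnorm1.
- move=> n1; split=> //; exists (qscale n%:~R (qconj a)).
  split; first exact: in_HoK_qscale_conj.
  by apply: qmul_scale_conj; rewrite an -intrM; case: n1 => ->.
Qed.

Theorem mainTheorem16 (d : nat) (p m : int) (xi psi phi : 'I_4) :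
  (0 < d)%N -> squarefree d -> (d %% 8)%N = 7%N ->
  xi != psi -> xi != phi -> psi != phi ->
  is_unit_HoK (- (d%:Z))
    (qadd (qscale (m%:~R * sqrtC (- (d%:R))) (qbasis xi))
          (qadd (qscale (p%:~R) (qbasis psi)) (qscale ((1 - p)%:~R) (qbasis phi))))
  <->
  is_unit_oF (2 * d%:Z) ((2 * p - 1)%:~R + m%:~R * sqrtC ((2 * d)%N%:R)).
Proof.
move=> _ _ d8 xi_psi xi_phi psi_phi.
have d4 : (d%:Z %% 4)%Z = 3 by lia.
have d_odd : odd d by rewrite (divn_eq d 8) d8 oddD oddM andbF.
have -> : (- d%:R : algC) = (- d%:Z)%:~R by rewrite intrN.
set u := qadd _ _.
set n := p ^+ 2 + (1 - p) ^+ 2 - m ^+ 2 * d%:Z.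
have u_HoK : in_HoK (- d%:Z) u.
  apply: in_HoK_qadd; [|apply: in_HoK_qadd]; apply: in_HoK_qscale_basis;
    [exact/in_ring_of_intMz/in_ring_of_int_sqrt | exact: in_ring_of_int_intr ..].
have uN : qnorm u = n%:~R.
  rewrite qnorm_basis3 // exprMn sqrtCK /n.
  by rewrite !(intrB, intrD, intrM, intrN, expr2); ring.
have eps_norm : (2 * p - 1) ^+ 2 - m ^+ 2 * (2 * d%:Z) = 2 * n - 1 by rewrite /n; ring.
apply: (iff_trans (is_unit_HoK_norm u_HoK uN)).
apply: (iff_trans _ (iff_sym (is_unit_oF_norm _ _ (sqrtC_double_odd_irr d_odd)))).
rewrite eps_norm; have [n0 n_1] : n <> 0 /\ n <> -1 := residue_mod4_neq0N1 p m d4.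
by clearbody n; split; lia.
Qed.
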